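(* Let $\psi\in C^1((0,\infty))$. (1) If $\psi$ is concave, then $C_\psi\ge0$. (2) If $\psi(x)+\psi(1/x)\neq2\psi(1)$ for some $x>0$, then $C_\psi\le0$.
   Context: For $x,y>0$, $\widetilde{\psi}(x,y):=[\psi'(x)+\psi'(y)](1-xy)+x[\psi(y)-\psi(1/x)]+y[\psi(x)-\psi(1/y)]$, and $C_\psi:=\inf\frac{\widetilde{\psi}(x,y)}{(\psi(x)+\psi(y)-2\psi(1))^2}\in[-\infty,\infty]$, the infimum taken over all $x,y>0$ with $\psi(x)+\psi(y)\neq2\psi(1)$. *)

From Stdlib Require Import Reals Lra.
Open Scope R_scope.

Definition C1_on_pos (psi dpsi : R -> R) : Prop :=
  (forall x, 0 < x -> derivable_pt_lim psi x (dpsi x)) /\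
  (forall x, 0 < x -> continuity_pt dpsi x).

Definition concave_on_pos (psi : R -> R) : Prop :=
  forall x y t, 0 < x -> 0 < y -> 0 <= t <= 1 ->
    t * psi x + (1 - t) * psi y <= psi (t * x + (1 - t) * y).

Definition psi_tilde (psi dpsi : R -> R) (x y : R) : R :=
  (dpsi x + dpsi y) * (1 - x * y)
  + x * (psi y - psi (/ x)) + y * (psi x - psi (/ y)).

(* the set whose infimum (in [-oo,+oo]) is C_psi *)
Definition C_set (psi dpsi : R -> R) (r : R) : Prop :=
  exists x y, 0 < x /\ 0 < y /\ psi x + psi y <> 2 * psi 1 /\
    r = psi_tilde psi dpsi x y / (psi x + psi y - 2 * psi 1) ^ 2.

Definition is_lower_bound (S : R -> Prop) (m : R) : Prop :=
  forall r, S r -> m <= r.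

(* C_psi >= 0  iff  0 is a lower bound of the set (inf of empty set = +oo) *)
Definition C_nonneg (psi dpsi : R -> R) : Prop :=
  is_lower_bound (C_set psi dpsi) 0.

(* C_psi <= 0  iff  every real lower bound is <= 0 *)
Definition C_nonpos (psi dpsi : R -> R) : Prop :=
  forall m, is_lower_bound (C_set psi dpsi) m -> m <= 0.

(** Concave case: the tangent-line inequality at [x] and at [y], evaluated at
    [1/y] and at [1/x] and multiplied by [y] and [x], sums exactly to
    [psi_tilde x y >= 0].  Second case: [psi_tilde x (1/x) = 0] for every [x],
    so the quotient vanishes at a point where the denominator does not, and
    every lower bound is [<= 0]. *)

From Stdlib Require Import Reals Lra.
Open Scope R_scope.

Lemma derivable_pt_lim_ge0_at_right_min (f : R -> R) (a l d : R) :
  derivable_pt_lim f a l -> 0 < d ->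
  (forall h, 0 < h < d -> f a <= f (a + h)) -> 0 <= l.
Proof.
  intros hf hd hmin.
  destruct (Rle_lt_dec 0 l) as [hl | hl]; [exact hl | exfalso].
  destruct (hf (- l) ltac:(lra)) as [[delta hdelta] hlim].
  set (h := Rmin d delta / 2).
  assert (hpos : 0 < Rmin d delta) by (apply Rmin_glb_lt; assumption).
  assert (hd' : h < d) by (unfold h; pose proof (Rmin_l d delta); lra).
  assert (hdelta' : h < delta) by (unfold h; pose proof (Rmin_r d delta); lra).
  assert (hh : 0 < h) by (unfold h; lra).
  assert (hq : 0 <= (f (a + h) - f a) / h).
  { unfold Rdiv; apply Rle_mult_inv_pos; [pose proof (hmin h (conj hh hd')) |]; lra. }
  specialize (hlim h ltac:(lra) ltac:(rewrite Rabs_pos_eq; simpl; lra)).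
  rewrite Rabs_pos_eq in hlim; lra.
Qed.

Lemma derivable_pt_lim_affine (a b t : R) :
  derivable_pt_lim (fun s => a + s * b) t b.
Proof.
  intros eps heps. exists (mkposreal eps heps). intros h hh _.
  replace ((a + (t + h) * b - (a + t * b)) / h - b) with 0 by (field; exact hh).
  now rewrite Rabs_R0.
Qed.

Lemma concave_tangent_le (psi : R -> R) (x z d : R) :
  concave_on_pos psi -> 0 < x -> 0 < z ->
  derivable_pt_lim psi x d -> psi z <= psi x + d * (z - x).
Proof.
  intros hc hx hz hd.
  (* [g t = psi (x + t (z - x)) - t (psi z - psi x)] attains its minimum on
     [[0, 1]] at [t = 0], by concavity along the chord from [x] to [z]. *)
  set (g := fun t => psi (x + t * (z - x)) - t * (psi z - psi x)).
  assert (hg : derivable_pt_lim g 0 (d * (z - x) - (psi z - psi x))).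
  { apply (derivable_pt_lim_ext
             (minus_fct (comp psi (fun t => x + t * (z - x)))
                        (fun t => 0 + t * (psi z - psi x))));
      [intro t; unfold g, comp, minus_fct; ring |].
    apply derivable_pt_lim_minus.
    - apply derivable_pt_lim_comp; [apply derivable_pt_lim_affine |].
      now rewrite Rmult_0_l, Rplus_0_r.
    - apply derivable_pt_lim_affine. }
  assert (hmin : forall t, 0 < t < 1 -> g 0 <= g (0 + t)).
  { intros t ht. unfold g.
    pose proof (hc z x t hz hx ltac:(lra)) as hchord.
    replace (t * z + (1 - t) * x) with (x + t * (z - x)) in hchord by ring.
    rewrite Rplus_0_l, Rmult_0_l, Rplus_0_r. lra. }
  apply (derivable_pt_lim_ge0_at_right_min g 0 _ 1) in hg; [lra | lra |].
  exact hmin.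
Qed.

Lemma psi_tilde_ge0 (psi dpsi : R -> R) (x y : R) :
  C1_on_pos psi dpsi -> concave_on_pos psi -> 0 < x -> 0 < y ->
  0 <= psi_tilde psi dpsi x y.
Proof.
  intros [hd _] hc hx hy.
  assert (hTx := concave_tangent_le psi x (/ y) (dpsi x) hc hx
                   (Rinv_0_lt_compat y hy) (hd x hx)).
  assert (hTy := concave_tangent_le psi y (/ x) (dpsi y) hc hy
                   (Rinv_0_lt_compat x hx) (hd y hy)).
  apply Rmult_le_compat_l with (r := y) in hTx; [|lra].
  apply Rmult_le_compat_l with (r := x) in hTy; [|lra].
  replace (y * (psi x + dpsi x * (/ y - x)))
    with (y * psi x + dpsi x * (1 - x * y)) in hTx by (field; lra).
  replace (x * (psi y + dpsi y * (/ x - y)))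
    with (x * psi y + dpsi y * (1 - x * y)) in hTy by (field; lra).
  unfold psi_tilde. lra.
Qed.

Lemma psi_tilde_inv_r (psi dpsi : R -> R) (x : R) :
  x <> 0 -> psi_tilde psi dpsi x (/ x) = 0.
Proof.
  intros hx. unfold psi_tilde. rewrite Rinv_inv, Rinv_r by exact hx. ring.
Qed.

Theorem mainTheorem15 (psi dpsi : R -> R) (hC1 : C1_on_pos psi dpsi) :
  (concave_on_pos psi -> C_nonneg psi dpsi) /\
  ((exists x, 0 < x /\ psi x + psi (/ x) <> 2 * psi 1) -> C_nonpos psi dpsi).
Proof.
  split.
  - intros hc r [x [y [hx [hy [hne ->]]]]].
    unfold Rdiv; apply Rle_mult_inv_pos.
    + exact (psi_tilde_ge0 psi dpsi x y hC1 hc hx hy).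
    + rewrite <- Rsqr_pow2. apply Rsqr_pos_lt. lra.
  - intros [x [hx hne]] m hm.
    apply (hm 0).
    exists x, (/ x).
    repeat split; try assumption.
    + now apply Rinv_0_lt_compat.
    + rewrite psi_tilde_inv_r by lra. unfold Rdiv. ring.
Qed.
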